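(* A family $\mathcal{X}$ of metric spaces belongs to $\mathfrak{C}_\alpha$ for some ordinal $\alpha$ if and only if it belongs to $\mathfrak{C}_\alpha$ for some countable ordinal $\alpha$; that is, $\bigcup_\alpha\mathfrak{C}_\alpha=\mathfrak{C}_{\omega_1}$.
   Context: A family $\mathcal{U}$ of metric subspaces of a metric space $(X,d)$ is $r$-disjoint if $d(x,y)>r$ whenever $x\in U$, $y\in U'$, $U\neq U'$ in $\mathcal{U}$. For families $\mathcal{X},\mathcal{Y}$ and $R\in\mathbb{R}^{\mathbb{N}}$, $\mathcal{X}\xrightarrow{R}\mathcal{Y}$ means: there is an integer $k$ such that for each $X\in\mathcal{X}$ there are subcollections $\mathcal{U}_1,\dots,\mathcal{U}_k\subseteq\mathcal{Y}$ of subspaces of $X$, each $\mathcal{U}_i$ being $R_i$-disjoint, with $\bigcup_i\mathcal{U}_i$ covering $X$. A family is bounded if the diameters of its members are uniformly bounded. $\mathfrak{C}_0$ is the class of bounded families; for an ordinal $\alpha>0$, $\mathfrak{C}_\alpha$ is the class of families $\mathcal{X}$ such that for every $R\in\mathbb{R}^{\mathbb{N}}$ there exist $\beta<\alpha$ and $\mathcal{Y}\in\mathfrak{C}_\beta$ with $\mathcal{X}\xrightarrow{R}\mathcal{Y}$. $\omega_1$ denotes the first uncountable ordinal. *)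

From Stdlib Require Import Reals.
Open Scope R_scope.

Definition is_metric (T : Type) (d : T -> T -> R) : Prop :=
  (forall x y, 0 <= d x y) /\
  (forall x y, d x y = 0 <-> x = y) /\
  (forall x y, d x y = d y x) /\
  (forall x y z, d x z <= d x y + d y z).

(* Metric subspaces of the ambient metric space (T,d) are subsets of T
   (with the induced metric); a mfamily is a set of such subspaces. *)
Arguments is_metric {T} d.

Definition subspace (T : Type) := T -> Prop.
Definition mfamily (T : Type) := subspace T -> Prop.

Definition r_disjoint (T : Type) (d : T -> T -> R) (r : R) (U : mfamily T) : Prop :=
  forall A B, U A -> U B -> A <> B -> forall x y, A x -> B y -> r < d x y.
Arguments r_disjoint {T} d r U.

(* X -R-> Y  (R_1,...,R_k of the paper are Rs 0, ..., Rs (k-1)). *)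
Definition arrow (T : Type) (d : T -> T -> R) (Rs : nat -> R)
    (X Y : mfamily T) : Prop :=
  exists k : nat, forall A, X A ->
    exists U : nat -> mfamily T,
      (forall i, (i < k)%nat ->
         (forall B, U i B -> Y B /\ (forall x, B x -> A x)) /\
         r_disjoint d (Rs i) (U i)) /\
      (forall x, A x -> exists i, (i < k)%nat /\ exists B, U i B /\ B x).

Arguments arrow {T} d Rs X Y.

Definition bounded (T : Type) (d : T -> T -> R) (X : mfamily T) : Prop :=
  exists D : R, forall A, X A -> forall x y, A x -> A y -> d x y <= D.
Arguments bounded {T} d X.

(* Ordinals are represented by elements of well-ordered types (O, lt). *)
Definition well_order (O : Type) (lt : O -> O -> Prop) : Prop :=
  well_founded lt /\
  (forall a b c, lt a b -> lt b c -> lt a c) /\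
  (forall a b, lt a b \/ a = b \/ lt b a).
Arguments well_order {O} lt.

Definition countable_ord (O : Type) (lt : O -> O -> Prop) (a : O) : Prop :=
  exists f : O -> nat, forall b c, lt b a -> lt c a -> f b = f c -> b = c.
Arguments countable_ord {O} lt a.

(* inC lt d a X  <->  X belongs to the class C_a (transfinite recursion along
   the well-order lt, presented as an inductive predicate):
   C_0 = bounded families; for a > 0, X in C_a iff for every R there are
   b < a and Y in C_b with X -R-> Y. *)
Inductive inC (T : Type) (d : T -> T -> R) (O : Type) (lt : O -> O -> Prop)
  : O -> mfamily T -> Prop :=
| inC_zero : forall a X, (forall b, ~ lt b a) -> bounded d X -> inC T d O lt a X
| inC_pos : forall a X, (exists b, lt b a) ->
    (forall Rs : nat -> R, exists b Y, lt b a /\ inC T d O lt b Y /\ arrow d Rs X Y) ->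
    inC T d O lt a X.
Arguments inC {T} d {O} lt _ _.

From Stdlib Require Import Reals Lra Lia Cantor Classical ClassicalEpsilon.
Open Scope R_scope.

(* The countable ordinals below an uncountable ordinal [a] form a set that no
   sequence reaches cofinally, so whenever such a set is split into countably
   many pieces one piece is still cofinal.  Suppose [X] lies in [C_a] with [a]
   uncountable and, by induction, every target family of the definition may be
   taken in a countable class; if [X] lay in no [C_e] with [e] countable, each
   countable [e < a] would come with a bad radius sequence [R^e].  Refining the
   cofinal set coordinate by coordinate yields one sequence [R*] such that, for
   every [k], cofinally many [e] have [R^e] below [R*] on the first [k]
   coordinates.  Now [X -R*-> Y] with [Y] in some countable [C_c] uses only
   [k] radii, so it also witnesses [X -R^e-> Y] for some such [e > c],
   contradicting the choice of [R^e]. *)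

Lemma well_founded_minimal (O : Type) (lt : O -> O -> Prop) (P : O -> Prop) :
  well_founded lt -> (exists x, P x) -> exists m, P m /\ forall y, lt y m -> ~ P y.
Proof.
  intros wf [x Px]; revert Px; induction (wf x) as [x _ IH]; intro Px.
  destruct (classic (exists y, lt y x /\ P y)) as [[y [yx Py]] | none].
  - exact (IH y yx Py).
  - exists x; split; [exact Px |]; intros y yx Py; apply none; eauto.
Qed.

(* [countable_ord lt a] is convertible to [countable_set (fun b => lt b a)]. *)
Definition countable_set (O : Type) (P : O -> Prop) : Prop :=
  exists f : O -> nat, forall x y, P x -> P y -> f x = f y -> x = y.
Arguments countable_set {O} P.

Lemma countable_set_subset (O : Type) (P Q : O -> Prop) :
  countable_set Q -> (forall x, P x -> Q x) -> countable_set P.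
Proof. intros [f f_inj] PQ; exists f; auto. Qed.

Lemma countable_set_bigunion (O : Type) (P : nat -> O -> Prop) :
  (forall n, countable_set (P n)) -> countable_set (fun x => exists n, P n x).
Proof.
  intro countP; destruct (choice _ countP) as [f f_inj].
  pose (index := fun x => epsilon (inhabits 0%nat) (fun n => P n x)).
  assert (index_spec : forall x, (exists n, P n x) -> P (index x) x)
    by (intros x; exact (epsilon_spec _ _)).
  exists (fun x => to_nat (index x, f (index x) x)).
  intros x y Px Py e; apply to_nat_inj in e; injection e as e_index e_f.
  apply index_spec in Px, Py; rewrite <- e_index in e_f, Py.
  exact (f_inj _ x y Px Py e_f).
Qed.

Lemma countable_set_add (O : Type) (P : O -> Prop) (c : O) :
  countable_set P -> countable_set (fun x => P x \/ x = c).
Proof.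
  intros [f f_inj].
  exists (fun x => if excluded_middle_informative (x = c) then 0%nat else S (f x)).
  intros x y Px Py.
  destruct (excluded_middle_informative (x = c)), (excluded_middle_informative (y = c));
    intro fx_fy; try congruence.
  injection fx_fy; apply f_inj; tauto.
Qed.

Section WellOrder.

Variables (O : Type) (lt : O -> O -> Prop).
Hypotheses (lt_wf : well_founded lt)
  (lt_trans : forall a b c, lt a b -> lt b c -> lt a c)
  (lt_total : forall a b, lt a b \/ a = b \/ lt b a).

Lemma countable_not_above_all (u : nat -> O) :
  (forall n, countable_ord lt (u n)) ->
  countable_set (fun y => ~ forall n, lt (u n) y).
Proof.
  intro count_u.
  apply countable_set_subset with (fun y => exists n, lt y (u n) \/ y = u n).
  - apply countable_set_bigunion; intro n; exact (countable_set_add _ _ _ (count_u n)).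
  - intros y not_above; apply NNPP; intro none; apply not_above; intro n.
    destruct (lt_total (u n) y) as [h | [h | h]]; auto; exfalso; eauto.
Qed.

Section Uncountable.

Variable a : O.
Hypothesis a_uncountable : ~ countable_ord lt a.

Definition countable_below (e : O) : Prop := lt e a /\ countable_ord lt e.

Lemma countable_below_strict_bound (u : nat -> O) :
  (forall n, countable_below (u n)) ->
  exists v, countable_below v /\ forall n, lt (u n) v.
Proof.
  intro below_u.
  assert (count_u : forall n, countable_ord lt (u n)) by apply below_u.
  pose (upper := fun x => lt x a /\ forall n, lt (u n) x).
  assert (upper_ex : exists x, upper x).
  { apply NNPP; intro none; apply a_uncountable.
    apply (countable_set_subset _ _ _ (countable_not_above_all u count_u)).
    intros y ya above; apply none; exists y; split; assumption. }
  destruct (well_founded_minimal _ lt upper lt_wf upper_ex) as [v [[va above] v_min]].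
  exists v; repeat split; auto.
  apply (countable_set_subset _ _ _ (countable_not_above_all u count_u)).
  intros y yv above_y; apply (v_min y yv); split; eauto.
Qed.

Definition cofinal (P : O -> Prop) : Prop :=
  forall e, countable_below e -> exists s, countable_below s /\ P s /\ lt e s.

Lemma cofinal_subset (P Q : O -> Prop) :
  cofinal P -> (forall x, P x -> Q x) -> cofinal Q.
Proof.
  intros cofP PQ e He; destruct (cofP e He) as [s [Hs [Ps es]]]; eauto.
Qed.

Lemma cofinal_countable_below : cofinal countable_below.
Proof.
  intros e He; destruct (countable_below_strict_bound (fun _ => e)) as [v [Hv ev]];
    [exact (fun _ => He) | exists v; exact (conj Hv (conj Hv (ev 0%nat)))].
Qed.

(* A non-cofinal piece [n] is bounded by some [u n]; the elements of [P] above
   a common bound of all the [u n] then lie in no piece. *)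
Lemma cofinal_pigeonhole (P : O -> Prop) (Q : nat -> O -> Prop) :
  cofinal P -> (forall s, P s -> exists n, Q n s) ->
  exists n, cofinal (fun s => P s /\ Q n s).
Proof.
  intros cofP cover; apply NNPP; intro none.
  assert (witness : forall n, exists u, countable_below u /\
            forall s, countable_below s -> P s -> Q n s -> ~ lt u s).
  { intro n; apply NNPP; intro no_u; apply none; exists n; intros e He.
    apply NNPP; intro no_s; apply no_u; exists e; split; [exact He |].
    intros s Hs Ps Qs es; apply no_s; eauto. }
  destruct (choice _ witness) as [u Hu].
  destruct (countable_below_strict_bound u (fun n => proj1 (Hu n))) as [v [Hv uv]].
  destruct (cofP v Hv) as [s [Hs [Ps vs]]].
  destruct (cover s Ps) as [n Qs].
  apply (proj2 (Hu n) s Hs Ps Qs); eauto.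
Qed.

End Uncountable.

End WellOrder.

Arguments countable_below {O} lt a e.
Arguments cofinal {O} lt a P.

Section PrefixDomination.

Variables (O : Type) (large : (O -> Prop) -> Prop).
Hypotheses
  (large_subset : forall P Q, large P -> (forall x, P x -> Q x) -> large Q)
  (large_pigeonhole : forall (P : O -> Prop) (Q : nat -> O -> Prop),
     large P -> (forall s, P s -> exists n, Q n s) ->
     exists n, large (fun s => P s /\ Q n s)).
Variable f : O -> nat -> R.

Definition threshold (P : O -> Prop) (k : nat) : nat :=
  epsilon (inhabits 0%nat) (fun n => large (fun e => P e /\ f e k <= INR n)).

Fixpoint dominated_part (E : O -> Prop) (k : nat) : O -> Prop :=
  match k with
  | 0%nat => E
  | S k => fun e => dominated_part E k e /\
                    f e k <= INR (threshold (dominated_part E k) k)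
  end.

Lemma large_dominated_part (E : O -> Prop) (k : nat) :
  large E -> large (dominated_part E k).
Proof.
  intro largeE; induction k as [| k IH]; [exact largeE |].
  apply (epsilon_spec (inhabits 0%nat) (fun n => large (fun e => _ e /\ f e k <= INR n))).
  apply (large_pigeonhole _ _ IH); intros s _.
  destruct (INR_unbounded (f s k)) as [n hn]; exists n; lra.
Qed.

Lemma dominated_part_spec (E : O -> Prop) (k : nat) (e : O) :
  dominated_part E k e ->
  E e /\ forall i, (i < k)%nat -> f e i <= INR (threshold (dominated_part E i) i).
Proof.
  induction k as [| k IH]; simpl; [intro Ee; split; [exact Ee | lia] |].
  intros [De le_k]; destruct (IH De) as [Ee le_i]; split; [exact Ee |].
  intros i ik; destruct (Nat.eq_dec i k) as [-> | ne]; [exact le_k | apply le_i; lia].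
Qed.

Lemma large_prefix_dominated (E : O -> Prop) :
  large E -> exists Rs : nat -> R,
    forall k, large (fun e => E e /\ forall i, (i < k)%nat -> f e i <= Rs i).
Proof.
  intro largeE; exists (fun i => INR (threshold (dominated_part E i) i)); intro k.
  apply (large_subset _ _ (large_dominated_part E k largeE)).
  intros e; apply dominated_part_spec.
Qed.

End PrefixDomination.

Lemma r_disjoint_le (T : Type) (d : T -> T -> R) (r r' : R) (U : mfamily T) :
  r <= r' -> r_disjoint d r' U -> r_disjoint d r U.
Proof.
  intros rr' disj A B UA UB AB x y Ax By; specialize (disj A B UA UB AB x y Ax By); lra.
Qed.

Lemma arrow_prefix_le (T : Type) (d : T -> T -> R) (Rs' : nat -> R) (X Y : mfamily T) :
  arrow d Rs' X Y ->
  exists k, forall Rs, (forall i, (i < k)%nat -> Rs i <= Rs' i) -> arrow d Rs X Y.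
Proof.
  intros [k cover]; exists k; intros Rs le; exists k; intros A XA.
  destruct (cover A XA) as [U [HU covers]]; exists U; split; [| exact covers].
  intros i ik; destruct (HU i ik) as [sub disj]; split; [exact sub |].
  exact (r_disjoint_le _ _ _ _ _ (le i ik) disj).
Qed.

Section Reflection.

Variables (T : Type) (d : T -> T -> R) (O : Type) (lt : O -> O -> Prop).
Hypotheses (lt_wf : well_founded lt)
  (lt_trans : forall a b c, lt a b -> lt b c -> lt a c)
  (lt_total : forall a b, lt a b \/ a = b \/ lt b a).

Lemma uncountable_reflection (a : O) (X : mfamily T) :
  ~ countable_ord lt a ->
  (forall Rs, exists c Y, countable_below lt a c /\ inC d lt c Y /\ arrow d Rs X Y) ->
  exists e, countable_below lt a e /\ inC d lt e X.
Proof.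
  intros a_unc arrows; apply NNPP; intro none.
  assert (bad : forall e, countable_below lt a e -> exists Rs,
            forall c Y, lt c e -> inC d lt c Y -> ~ arrow d Rs X Y).
  { intros e He; apply NNPP; intro all_good; apply none; exists e; split; [exact He |].
    assert (good : forall Rs, exists c Y, lt c e /\ inC d lt c Y /\ arrow d Rs X Y).
    { intro Rs; apply NNPP; intro N; apply all_good; exists Rs; intros c Y ce HY HXY.
      apply N; eauto. }
    apply inC_pos; [| exact good].
    destruct (good (fun _ => 0)) as [c [Y [ce _]]]; eauto. }
  pose (badRs := fun e => epsilon (inhabits (fun _ : nat => 0))
                   (fun Rs => forall c Y, lt c e -> inC d lt c Y -> ~ arrow d Rs X Y)).
  assert (HbadRs : forall e, countable_below lt a e ->
            forall c Y, lt c e -> inC d lt c Y -> ~ arrow d (badRs e) X Y)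
    by (intros e He; exact (epsilon_spec _ _ (bad e He))).
  destruct (large_prefix_dominated _ (cofinal lt a)
              (cofinal_subset O lt a) (cofinal_pigeonhole O lt lt_wf lt_trans lt_total a a_unc)
              badRs _ (cofinal_countable_below O lt lt_wf lt_trans lt_total a a_unc))
    as [Rs dominated].
  destruct (arrows Rs) as [c [Y [Hc [HY HXY]]]].
  destruct (arrow_prefix_le _ _ _ _ _ HXY) as [k restrict].
  destruct (dominated k c Hc) as [s [Hs [[_ le] cs]]].
  exact (HbadRs s Hs c Y cs HY (restrict _ le)).
Qed.

Lemma inC_countable_le (a : O) (X : mfamily T) :
  inC d lt a X -> exists b, (lt b a \/ b = a) /\ countable_ord lt b /\ inC d lt b X.
Proof.
  revert X; induction (lt_wf a) as [a _ IH]; intros X HX.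
  destruct (classic (countable_ord lt a)) as [a_count | a_unc]; [exists a; auto |].
  destruct HX as [a X a_min _ | a X _ arrows].
  { exfalso; apply a_unc; exists (fun _ => 0%nat); intros b c ba; destruct (a_min b ba). }
  destruct (uncountable_reflection a X a_unc) as [e [[ea e_count] HX]]; [| eauto].
  intro Rs; destruct (arrows Rs) as [b [Y [ba [HY HXY]]]].
  destruct (IH b ba Y HY) as [c [cb [c_count HcY]]].
  exists c, Y; repeat split; auto.
  destruct cb as [cb | ->]; eauto.
Qed.

End Reflection.

Theorem theorem3p5 (T : Type) (d : T -> T -> R) (hd : is_metric d)
    (X : mfamily T) :
  (exists (O : Type) (lt : O -> O -> Prop),
      well_order lt /\ exists a : O, inC d lt a X) <->
  (exists (O : Type) (lt : O -> O -> Prop),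
      well_order lt /\ exists a : O, countable_ord lt a /\ inC d lt a X).
Proof.
  split.
  - intros [O [lt [wo [a Ha]]]].
    pose proof wo as [lt_wf [lt_trans lt_total]].
    destruct (inC_countable_le T d O lt lt_wf lt_trans lt_total a X Ha)
      as [b [_ [b_count Hb]]].
    exists O, lt; split; [exact wo |]; exists b; auto.
  - intros [O [lt [wo [a [_ Ha]]]]]; exists O, lt; split; [exact wo |]; exists a; exact Ha.
Qed.
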